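(* The Krull dimension of $\mathcal{S}'(\mathbb{Z}^{d})$ is infinite: for every $N\in\mathbb{N}$ there exist prime ideals $\mathfrak{p}_{N+1}\subsetneq\mathfrak{p}_N\subsetneq\cdots\subsetneq\mathfrak{p}_1$ of $\mathcal{S}'(\mathbb{Z}^{d})$, all proper.
   Context: For $\mathbf{n}=(n_1,\dots,n_d)\in\mathbb{Z}^d$ write $\|\mathbf{n}\|:=|n_1|+\cdots+|n_d|$. $\mathcal{S}'(\mathbb{Z}^{d})$ denotes the set of all maps $f:\mathbb{Z}^d\to\mathbb{C}$ of at most polynomial growth, i.e. for which there exist a real $M>0$ and an integer $m\geq 0$ with $|f(\mathbf{n})|\leq M(1+\|\mathbf{n}\|)^m$ for all $\mathbf{n}\in\mathbb{Z}^d$. It is a commutative unital ring under pointwise addition and multiplication. The Krull dimension of a commutative ring is the supremum of the lengths of chains of distinct proper prime ideals. *)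

From mathcomp Require Import all_boot all_algebra.
From mathcomp Require Import reals.
From mathcomp Require Export complex.
Set Implicit Arguments. Unset Strict Implicit. Unset Printing Implicit Defensive.
Import GRing.Theory Num.Theory.
Local Open Scope ring_scope.

Definition Zd (d : nat) := 'I_d -> int.

Definition norm1 (d : nat) (n : Zd d) : nat := (\sum_(i < d) `|n i|)%N.

Definition Fun (R : realType) (d : nat) := Zd d -> R[i].

(* S'(Z^d): maps of at most polynomial growth *)
Definition tempered (R : realType) (d : nat) (f : Fun R d) : Prop :=
  exists (M : R) (m : nat), 0 < M /\
    forall n : Zd d, `|f n| <= ((M * ((1 + norm1 n)%:R) ^+ m)%:C)%C.

Definition fadd (R : realType) (d : nat) (f g : Fun R d) : Fun R d := fun n => f n + g n.
Definition fmul (R : realType) (d : nat) (f g : Fun R d) : Fun R d := fun n => f n * g n.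
Definition fzero (R : realType) (d : nat) : Fun R d := fun _ => 0.
Definition fone (R : realType) (d : nat) : Fun R d := fun _ => 1.

Definition is_ideal (R : realType) (d : nat) (P : Fun R d -> Prop) : Prop :=
  [/\ (forall f, P f -> tempered f),
      P (@fzero R d),
      (forall f g, P f -> P g -> P (fadd f g))
    & (forall a f, tempered a -> P f -> P (fmul a f))].

Definition is_prime_ideal (R : realType) (d : nat) (P : Fun R d -> Prop) : Prop :=
  [/\ is_ideal P,
      ~ P (@fone R d)
    & (forall f g, tempered f -> tempered g -> P (fmul f g) -> P f \/ P g)].

Definition strict_subset (R : realType) (d : nat) (P Q : Fun R d -> Prop) : Prop :=
  (forall f, P f -> Q f) /\ (exists f, Q f /\ ~ P f).

(* Fix an ultrafilter U on nat containing all tails [K, oo) and restrict maps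
   to the diagonal n |-> (n, 0, ..., 0) of Z^d, whose 1-norm is n.  A growth
   exponent h : nat -> nat defines the weight w_h(n) = (n+1)^h(n), and
     J_h = { f in S'(Z^d) | forall r, |f(n,0,...,0)| w_h(n)^r <= 1 for U-most n }
   is the set of tempered maps decaying along U faster than every power of w_h.
   - If h is positive then J_h is a proper prime ideal: a positive exponent
     makes w_h dominate every polynomial (so J_h absorbs tempered factors), U
     decides each weighted inequality and w_h^(r+s) = w_h^r w_h^s (primality).
   - If h is negligible w.r.t. h' (r h <= h' eventually, for every r) then
     J_h' is strictly contained in J_h, the map 1/w_h'(||x||) separating them.
   The file first develops closure properties of tempered maps (via bounds
   K (1 + ||x||)^m with natural K, m), then the arithmetic of the weights, then
   the ideals J_h; the chain J_{n^0} > J_{n^1} > ... > J_{n^N} proves the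
   theorem. *)
From mathcomp Require Import all_boot all_algebra.
From mathcomp Require Import reals complex order.
Import Order.TTheory GRing.Theory Num.Theory.
From mathcomp Require Import boolp classical_sets filter.
Local Open Scope ring_scope.

Section Tempered.
Variables (R : realType) (d : nat).
Implicit Types f g : Fun R d.

(* Temperedness with a natural constant, so that bounds live in nat. *)
Lemma tempered_natP f :
  tempered f <-> exists K m : nat, forall x, `|f x| <= (K * (1 + norm1 x) ^ m)%:R.
Proof.
split=> [[M [m [M_gt0 f_le]]]|[K [m f_le]]].
- exists (Num.Def.archi_bound M), m => x; apply: le_trans (f_le x) _.
  rewrite rmorphM rmorphXn /= !rmorph_nat natrM natrX ler_wpM2r ?exprn_ge0 //.
  by rewrite -(rmorph_nat (real_complex R)) lecR; apply/ltW/archi_boundP/ltW.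
- exists K.+1%:R, m; split=> // x; apply: le_trans (f_le x) _.
  rewrite natrM natrX rmorphM rmorphXn /= !rmorph_nat ler_wpM2r ?exprn_ge0 //.
  by rewrite ler_nat.
Qed.

Lemma tempered_le1 f : (forall x, `|f x| <= 1) -> tempered f.
Proof. by move=> f_le1; apply/tempered_natP; exists 1%N, 0%N => x; rewrite mul1n. Qed.

Lemma tempered_add f g : tempered f -> tempered g -> tempered (fadd f g).
Proof.
move=> /tempered_natP[K1 [m1 f_le]] /tempered_natP[K2 [m2 g_le]].
apply/tempered_natP; exists (K1 + K2)%N, (m1 + m2)%N => x.
apply: le_trans (ler_normD _ _) _; rewrite mulnDl natrD.
have raise_exp K m : (m <= m1 + m2)%N ->
    (K * (1 + norm1 x) ^ m)%:R <= (K * (1 + norm1 x) ^ (m1 + m2))%:R :> R[i].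
  by move=> le_m; rewrite ler_nat leq_mul // leq_pexp2l.
apply: lerD; [apply: le_trans (f_le x) (raise_exp _ _ (leq_addr _ _))
             |apply: le_trans (g_le x) (raise_exp _ _ (leq_addl _ _))].
Qed.

Lemma tempered_mul f g : tempered f -> tempered g -> tempered (fmul f g).
Proof.
move=> /tempered_natP[K1 [m1 f_le]] /tempered_natP[K2 [m2 g_le]].
apply/tempered_natP; exists (K1 * K2)%N, (m1 + m2)%N => x.
rewrite /fmul normrM expnD mulnACA natrM.
by apply: ler_pM; rewrite ?normr_ge0.
Qed.
End Tempered.

Definition diag (d n : nat) : Zd d := fun i => if val i == 0%N then n%:Z else 0.

Lemma norm1_diag d n : (0 < d)%N -> norm1 (diag d n) = n.
Proof.
case: d => // d _; rewrite /norm1 big_ord_recl /diag /=.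
by rewrite big1 ?addn0.
Qed.

Definition weight (h : nat -> nat) (r n : nat) : nat := n.+1 ^ (r * h n).

Lemma weightD h r s n : weight h (r + s) n = (weight h r n * weight h s n)%N.
Proof. by rewrite /weight mulnDl expnD. Qed.

Lemma weight_gt0 h r n : (0 < weight h r n)%N.
Proof. by rewrite expn_gt0. Qed.

Lemma weight_ge2 h n : (0 < n)%N -> (0 < h n)%N -> (2 <= weight h 1 n)%N.
Proof.
move=> n_gt0 h_gt0; rewrite /weight mul1n.
by apply: leq_trans (leq_pexp2l _ h_gt0); rewrite // expn1 ltnS.
Qed.

Lemma weight_dominates_poly h K m n :
  (0 < h n)%N -> (K <= n)%N -> (K * n.+1 ^ m <= weight h m.+1 n)%N.
Proof.
move=> h_gt0 le_Kn; rewrite /weight.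
apply: (@leq_trans (n.+1 ^ m.+1)); first by rewrite expnS leq_mul2r ltnW ?orbT.
by rewrite leq_pexp2l // -{1}(muln1 m.+1) leq_mul2l h_gt0 orbT.
Qed.

Lemma weight_le h h' r n : (r * h n <= h' n)%N -> (weight h r n <= weight h' 1 n)%N.
Proof. by move=> le_exp; rewrite /weight mul1n leq_pexp2l. Qed.

Definition negligible (h h' : nat -> nat) : Prop :=
  forall r, exists K, forall n, (K <= n)%N -> (r * h n <= h' n)%N.

Section DecayIdeals.
Local Open Scope classical_set_scope.
Variables (R : realType) (d : nat).
Hypothesis d_gt0 : (0 < d)%N.
Variable U : set_system nat.
Context {U_ultra : UltraFilter U}.
Hypothesis U_cofinite : eventually `<=` U.

Definition decay_ideal (h : nat -> nat) (f : Fun R d) : Prop :=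
  tempered f /\ forall r, U [set n | `|f (diag d n)| * (weight h r n)%:R <= 1].

Lemma U_tail K : U [set n | (K <= n)%N].
Proof. by apply: U_cofinite; exists K. Qed.

Lemma U_compl {A : set nat} : ~ U A -> U (~` A).
Proof. by case: (in_ultra_setVsetC A U_ultra). Qed.

(* Weighted absolute values are real numbers, hence comparable with 1. *)
Lemma weighted_gt1 (z : R[i]) (w : nat) : ~ (`|z| * w%:R <= 1) -> 1 < `|z| * w%:R.
Proof.
by move/negP; rewrite -real_ltNge ?realM ?normr_real ?realn ?real1.
Qed.

(* Primality: U decides every weighted inequality, and the weights are
   multiplicative in the exponent r, so if neither f nor g decays then
   fg fails to decay for the sum of the offending exponents. *)
Lemma decay_ideal_mul_prime h f g : tempered f -> tempered g ->
  decay_ideal h (fmul f g) -> decay_ideal h f \/ decay_ideal h g.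
Proof.
move=> tf tg [_ fg_dec].
have [f_dec|/existsNP[r f_big]] :=
  pselect (forall r, U [set n | `|f (diag d n)| * (weight h r n)%:R <= 1]).
  by left.
right; split=> // s; apply: contrapT => g_big.
have [n /= [[/weighted_gt1 f_gt1 /weighted_gt1 g_gt1] fg_le1]] :=
  filter_ex (filterI (filterI (U_compl f_big) (U_compl g_big)) (fg_dec (r + s)%N)).
move: fg_le1; rewrite /fmul normrM weightD natrM mulrACA.
by rewrite lt_geF // mulr_egt1.
Qed.

Section PositiveExponent.
Variable h : nat -> nat.
Hypothesis h_pos : forall n, (0 < n)%N -> (0 < h n)%N.

(* Closure under sums: at U-most n >= 1, (|f| + |g|) w_h^r <= 2 / w_h <= 1. *)
Lemma decay_ideal_add f g :
  decay_ideal h f -> decay_ideal h g -> decay_ideal h (fadd f g).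
Proof.
move=> [tf f_dec] [tg g_dec]; split=> [|r]; first exact: tempered_add.
apply: filterS (filterI (filterI (f_dec r.+1) (g_dec r.+1)) (U_tail 1)).
move=> n /= [[f_le g_le] n_gt0].
have w_ge2 : 2%:R <= (weight h 1 n)%:R :> R[i] by rewrite ler_nat weight_ge2 ?h_pos.
rewrite -(ler_pM2r (_ : 0 < 2%:R :> R[i])) ?ltr0n // mul1r.
apply: le_trans (_ : (`|f (diag d n)| + `|g (diag d n)|) * (weight h r.+1 n)%:R <= _).
  rewrite -[r.+1]addn1 weightD natrM mulrA ler_pM ?mulr_ge0 ?normr_ge0 ?ler0n //.
  by apply: ler_wpM2r; [exact: ler0n | exact: ler_normD].
by rewrite mulrDl -[2%:R]/(1 + 1) lerD.
Qed.

(* Closure under tempered factors: a polynomial bound K (n+1)^m on a is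
   eventually below w_h^(m+1). *)
Lemma decay_ideal_absorb a f :
  tempered a -> decay_ideal h f -> decay_ideal h (fmul a f).
Proof.
move=> ta [tf f_dec]; split=> [|r]; first exact: tempered_mul.
have /tempered_natP[K [m a_le]] := ta.
apply: filterS (filterI (filterI (f_dec (m.+1 + r)%N) (U_tail K)) (U_tail 1)).
move=> n /= [[f_le le_Kn] n_gt0]; apply: le_trans f_le.
rewrite /fmul normrM weightD natrM mulrA [_ * (weight h m.+1 n)%:R]mulrC.
apply: ler_wpM2r; first exact: ler0n.
apply: ler_wpM2r; first exact: normr_ge0.
apply: le_trans (a_le _) _; rewrite norm1_diag // add1n ler_nat.
exact: weight_dominates_poly (h_pos _ n_gt0) le_Kn.
Qed.

Lemma decay_ideal_is_ideal : is_ideal (decay_ideal h).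
Proof.
split=> [f [] //| | |]; last 2 first.
- exact: decay_ideal_add.
- exact: decay_ideal_absorb.
split=> [|r]; first by apply: tempered_le1 => x; rewrite normr0 ler01.
by apply: filterS filterT => n _ /=; rewrite normr0 mul0r ler01.
Qed.

(* The constant 1 does not decay: its weighted values are eventually >= 2. *)
Lemma decay_ideal_proper : ~ decay_ideal h (@fone R d).
Proof.
move=> [_ /(_ 1%N) one_dec].
have [n /= [one_le n_gt0]] := filter_ex (filterI one_dec (U_tail 1)).
move: one_le; rewrite /fone normr1 mul1r lern1 => w_le1.
by have := leq_trans (weight_ge2 h _ n_gt0 (h_pos _ n_gt0)) w_le1.
Qed.

Lemma decay_ideal_prime : is_prime_ideal (decay_ideal h).
Proof.
split; [exact: decay_ideal_is_ideal | exact: decay_ideal_proper |].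
exact: decay_ideal_mul_prime.
Qed.
End PositiveExponent.

Lemma weight_eventually_le {h h' : nat -> nat} r :
  negligible h h' -> U [set n | (weight h r n)%:R <= (weight h' 1 n)%:R :> R[i]].
Proof.
move=> hh'; have [K le_exp] := hh' r.
by apply: filterS (U_tail K) => n /= le_Kn; rewrite ler_nat weight_le ?le_exp.
Qed.

Lemma decay_ideal_antitone h h' f :
  negligible h h' -> decay_ideal h' f -> decay_ideal h f.
Proof.
move=> hh' [tf f_dec]; split=> // r.
apply: filterS (filterI (f_dec 1%N) (weight_eventually_le r hh')) => n /= [f_le w_le].
exact: le_trans (ler_wpM2l (normr_ge0 (f (diag d n))) w_le) f_le.
Qed.

Definition inv_weight (h' : nat -> nat) : Fun R d :=
  fun x => ((weight h' 1 (norm1 x))%:R)^-1.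

Lemma inv_weight_tempered h' : tempered (inv_weight h').
Proof.
apply: tempered_le1 => x.
by rewrite normfV normr_nat invf_le1 ?ler1n ?ltr0n ?weight_gt0.
Qed.

Lemma inv_weight_diag h' n :
  `|inv_weight h' (diag d n)| * (weight h' 1 n)%:R = 1.
Proof.
rewrite /inv_weight norm1_diag // normfV normr_nat mulVf //.
by rewrite pnatr_eq0 -lt0n weight_gt0.
Qed.

(* The inclusion J_h' <= J_h is strict: 1 / w_h' lies in J_h, but its product
   with w_h'^2 is w_h' >= 2, so it is not in J_h'. *)
Lemma decay_ideal_strict h h' : (forall n, (0 < n)%N -> (0 < h' n)%N) ->
  negligible h h' -> strict_subset (decay_ideal h') (decay_ideal h).
Proof.
move=> h'_pos hh'; split=> [f|]; first exact: decay_ideal_antitone.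
exists (inv_weight h'); split.
  split=> [|r]; first exact: inv_weight_tempered.
  apply: filterS (weight_eventually_le r hh') => n /= w_le.
  rewrite -[X in _ <= X](inv_weight_diag h' n).
  by apply: ler_wpM2l; [exact: normr_ge0 | exact: w_le].
move=> [_ /(_ 2%N) inv_dec].
have [n /= [inv_le n_gt0]] := filter_ex (filterI inv_dec (U_tail 1)).
move: inv_le; rewrite (weightD h' 1 1) natrM mulrA inv_weight_diag mul1r lern1.
by move/(leq_trans (weight_ge2 h' _ n_gt0 (h'_pos _ n_gt0))).
Qed.
End DecayIdeals.

Lemma negligible_expn j : negligible (expn^~ j) (expn^~ j.+1).
Proof. by move=> r; exists r => n le_rn; rewrite expnS leq_mul2r le_rn orbT. Qed.

Theorem theorem4p4 (R : realType) (d : nat) (hd : (0 < d)%N) (N : nat) :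
  exists p : nat -> (Fun R d -> Prop),
    (forall k : nat, (1 <= k <= N.+1)%N -> is_prime_ideal (p k)) /\
    (forall k : nat, (1 <= k <= N)%N -> strict_subset (p k.+1) (p k)).
Proof.
have [U [U_ultra U_cofinite]] := ultraFilterLemma eventually_filter.
have exp_pos j n : (0 < n)%N -> (0 < n ^ j)%N by rewrite expn_gt0 => ->.
exists (fun k => decay_ideal R d U (expn^~ k.-1)); split=> [k _|[|k] // _].
  by apply: decay_ideal_prime => //; apply: exp_pos.
by apply: decay_ideal_strict => //; [apply: exp_pos | apply: negligible_expn].
Qed.
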